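(* Let all issues be binary. Fix a vote profile $a$, an agent $j$ and an issue $i$. Consider three uncertainty parameter vectors $r_j,q_j,\hat q_j\in\mathbb R_{\ge0}^p$: - $q_j$ differs from $r_j$ only on one issue $k\ne i$, with $r_j^k<q_j^k$; - $\hat q_j$ differs from $r_j$ only on issue $i$, with $r_j^i<\hat q_j^i$. Let $LD^i_j$, $LQ^i_j$ and $\widehat{LQ}^i_j$ be the sets of local dominance improvement steps of $j$ on issue $i$ at $a$ under $S=\tilde S_{-j}(a;r_j)$, $S=\tilde S_{-j}(a;q_j)$ and $S=\tilde S_{-j}(a;\hat q_j)$, respectively. Then $$LQ^i_j\subseteq LD^i_j\subseteq \widehat{LQ}^i_j.$$
   Context: Issues $\mathcal P=\{1,\dots,p\}$, each with a finite candidate set $D_i$; alternatives are $\mathcal D=\prod_i D_i$. Binary issues means $D_i=\{0,1\}$ for all $i$. There are $n$ agents, and each agent $j$ has a strict linear order $\succ_j$ over $\mathcal D$. A vote profile is $a\in\mathcal D^n$. Score tuples and outcomes: - A score tuple $v=(v^i)_{i\in\mathcal P}$ consists of vectors $v^i\in\mathbb N^{D_i}$. - Plurality outcome $f(v)=(f^i(v))_i$: $f^i(v)$ is the candidate of maximum score $v^i(c)$, with ties broken lexicographically. - For a vote $b\in\mathcal D$, $v+b$ adds one to $v^i(b^i)$ for every issue $i$. - $s_{-j}(a)$ is the score tuple of $a$ without agent $j$'s vote. Uncertainty sets: a distance on score vectors of issue $i$ is candidate-wise if $\delta(s,\tilde s)=\max_{c\in D_i}\hat\delta(s(c),\tilde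 s(c))$ for a monotone function $\hat\delta$. Examples are the $\ell_\infty$ distance $\hat\delta(s,\tilde s)=|s-\tilde s|$ and the multiplicative distance. Given uncertainty parameters $r_j=(r_j^i)_i$, define $$\tilde S^i_{-j}(a;r^i_j)=\{v^i:\delta(v^i,s^i_{-j}(a))\le r^i_j\}, \qquad \tilde S_{-j}(a;r_j)=\prod_i\tilde S^i_{-j}(a;r_j^i).$$ Local dominance: a vote $\hat a_j$ $S$-beats $a_j$ if there is $v\in S$ with $f(v+\hat a_j)\succ_j f(v+a_j)$. The vote $\hat a_j$ $S$-dominates $a_j$ if $\hat a_j$ $S$-beats $a_j$ and $a_j$ does not $S$-beat $\hat a_j$. The set of local dominance improvement (LDI) steps of $j$ on issue $i$ (under $S$) is the set of votes that satisfy all of the following: - they $S$-dominate $a_j$; - they differ from $a_j$ only on issue $i$; - they are not $S$-dominated by any vote differing from $a_j$ only on issue $i$. *)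

From mathcomp Require Import all_boot all_order all_algebra.
Set Implicit Arguments. Unset Strict Implicit. Unset Printing Implicit Defensive.
Import Order.TTheory GRing.Theory Num.Theory.
Local Open Scope ring_scope.

(* Binary issues: p issues 'I_p, each with candidate set bool (0 = false, 1 = true).
   Alternatives (= votes): {ffun 'I_p -> bool}. Agents: 'I_n. *)
Definition alt (p : nat) := {ffun 'I_p -> bool}.

Definition scores (p : nat) := 'I_p -> bool -> nat.

Definition strict_linear_order (T : eqType) (pr : rel T) : Prop :=
  [/\ irreflexive pr, transitive pr & forall x y, x != y -> pr x y || pr y x].

(* Plurality outcome, ties broken lexicographically (false = 0 wins ties). *)
Definition outcome (p : nat) (v : scores p) : alt p :=
  [ffun i => v i false < v i true]%N.

Definition add_vote (p : nat) (v : scores p) (b : alt p) : scores p :=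
  fun i c => (v i c + (b i == c))%N.

Definition score_minus (p n : nat) (a : 'I_n -> alt p) (j : 'I_n) : scores p :=
  fun i c => #|[set j' : 'I_n | (j' != j) && (a j' i == c)]|.

Definition cw_dist (R : realFieldType) (dhat : nat -> nat -> R)
  (s t : bool -> nat) : R :=
  Num.max (dhat (s false) (t false)) (dhat (s true) (t true)).

Definition monotone_dist (R : realFieldType) (dhat : nat -> nat -> R) : Prop :=
  (forall x, dhat x x = 0) /\
  (forall x y, 0 <= dhat x y) /\
  (forall x y z, (x <= y <= z)%N || (z <= y <= x)%N ->
      dhat x y <= dhat x z /\ dhat y x <= dhat z x).

Definition unc_set (R : realFieldType) (p n : nat)
  (dhat : 'I_p -> nat -> nat -> R) (a : 'I_n -> alt p) (j : 'I_n)
  (r : 'I_p -> R) : scores p -> Prop :=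
  fun v => forall i, cw_dist (dhat i) (v i) (score_minus a j i) <= r i.

Definition Sbeats (p : nat) (S : scores p -> Prop) (pr : rel (alt p))
  (b a : alt p) : Prop :=
  exists v, S v /\ pr (outcome (add_vote v b)) (outcome (add_vote v a)).

Definition Sdominates (p : nat) (S : scores p -> Prop) (pr : rel (alt p))
  (b a : alt p) : Prop :=
  Sbeats S pr b a /\ ~ Sbeats S pr a b.

Definition differs_only_on (p : nat) (i : 'I_p) (b a : alt p) : Prop :=
  forall l, l != i -> b l = a l.

Definition LDI (p : nat) (S : scores p -> Prop) (pr : rel (alt p))
  (aj : alt p) (i : 'I_p) : alt p -> Prop :=
  fun b => [/\ Sdominates S pr b aj, differs_only_on i b aj &
     ~ exists b', differs_only_on i b' aj /\ Sdominates S pr b' b].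

From mathcomp Require Import all_boot all_order all_algebra.
From mathcomp Require Import zify.
Import Order.TTheory GRing.Theory Num.Theory.
Local Open Scope ring_scope.

Set Implicit Arguments. Unset Strict Implicit.

(* With binary issues, a vote changing only issue [i] either leaves every
   outcome unchanged or flips the outcome of issue [i] to itself; so whether
   [b] beats [a_j] on a score tuple [v] is decided by [v i] alone.  Hence:
   - enlarging the uncertainty on another issue [k] adds no new witnesses,
     since resetting [v k] to the true score keeps a witness a witness;
   - enlarging the uncertainty on [i] adds no witness for [a_j] against [b],
     since the [i]-component of any witness for [b] against [a_j] can be
     grafted onto it.
   Finally, the only votes differing from [a_j] only on [i] are [a_j] and [b],
   so every dominating such [b] is automatically undominated. *)

Section Outcomes.

Variable p : nat.
Implicit Types (v w : scores p) (b c d : alt p) (i l : 'I_p).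

Lemma outcome_add_vote_scores v w c l :
  v l = w l -> outcome (add_vote v c) l = outcome (add_vote w c) l.
Proof. by move=> evw; rewrite /outcome !ffunE /add_vote evw. Qed.

Lemma outcome_add_vote_votes v c d l :
  c l = d l -> outcome (add_vote v c) l = outcome (add_vote v d) l.
Proof. by move=> ecd; rewrite /outcome !ffunE /add_vote ecd. Qed.

Lemma outcome_pivotal v c d l :
  outcome (add_vote v c) l != outcome (add_vote v d) l ->
  outcome (add_vote v c) l = c l.
Proof.
rewrite /outcome !ffunE /add_vote; move: (v l false) (v l true) => x y.
by case: (c l); case: (d l) => //=; rewrite ?addn0 ?addn1 ?eqxx //;
  case: (ltnP x y.+1); case: (ltnP x.+1 y) => // *; lia.
Qed.

Lemma differs_only_on_eq i b c : differs_only_on i b c -> b i = c i -> b = c.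
Proof.
by move=> bc ebc; apply/ffunP => l; case: (eqVneq l i) => [->|/bc].
Qed.

Lemma outcome_eq_on_issue v i b c :
  differs_only_on i b c ->
  outcome (add_vote v b) i = outcome (add_vote v c) i ->
  outcome (add_vote v b) = outcome (add_vote v c).
Proof.
move=> bc ei; apply/ffunP => l; case: (eqVneq l i) => [-> //|li].
exact/outcome_add_vote_votes/bc.
Qed.

Lemma Sbeats_sub (S T : scores p -> Prop) pr b c :
  (forall v, S v -> T v) -> Sbeats S pr b c -> Sbeats T pr b c.
Proof. by move=> ST [v [/ST Tv bc]]; exists v. Qed.

Lemma LDI_of_dominates (S : scores p -> Prop) pr aj i b :
  Sdominates S pr b aj -> differs_only_on i b aj -> LDI S pr aj i b.
Proof.
move=> b_aj b_on_i; split=> // -[b' [b'_on_i b'_b]].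
have b_i : b i != aj i.
  apply/eqP=> /(differs_only_on_eq b_on_i) ebaj.
  by move: b_aj; rewrite ebaj => -[].
have [/(differs_only_on_eq b'_on_i) eb'aj | b'_i] := eqVneq (b' i) (aj i).
  by move: b'_b; rewrite eb'aj => -[] /(proj2 b_aj).
have eb'b : b' = b.
  apply: (differs_only_on_eq (i := i)) => [l li|]; first by rewrite b'_on_i // b_on_i.
  by move: b'_i b_i; case: (b' i); case: (b i); case: (aj i).
by move: b'_b; rewrite eb'b => -[].
Qed.

Variable pr : rel (alt p).
Hypothesis pr_irr : irreflexive pr.

Lemma preferred_outcome_differs_on_issue v i b c :
  differs_only_on i b c ->
  pr (outcome (add_vote v b)) (outcome (add_vote v c)) ->
  outcome (add_vote v b) i != outcome (add_vote v c) i.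
Proof.
move=> bc pr_bc; apply/eqP => /(outcome_eq_on_issue bc) e.
by rewrite e pr_irr in pr_bc.
Qed.

End Outcomes.

Definition set_issue (p : nat) (v : scores p) (m : 'I_p) (t : bool -> nat) : scores p :=
  fun l => if l == m then t else v l.

Lemma cw_dist_refl (R : realFieldType) (dh : nat -> nat -> R) s :
  (forall x, dh x x = 0) -> cw_dist dh s s = 0.
Proof. by move=> dh0; rewrite /cw_dist !dh0 maxxx. Qed.

Section Uncertainty.

Variables (R : realFieldType) (p n : nat) (dhat : 'I_p -> nat -> nat -> R).
Variables (a : 'I_n -> alt p) (j : 'I_n).
Local Notation U := (unc_set dhat a j).
Implicit Types (r q : 'I_p -> R) (v w : scores p).

Lemma unc_set_le r q : (forall l, r l <= q l) -> forall v, U r v -> U q v.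
Proof. by move=> rq v rv l; apply: le_trans (rv l) (rq l). Qed.

Lemma unc_set_set_issue r q v m t :
  (forall l, l != m -> q l = r l) -> U q v ->
  cw_dist (dhat m) t (score_minus a j m) <= r m -> U r (set_issue v m t).
Proof.
move=> qr qv tm l; rewrite /set_issue.
by case: (eqVneq l m) => [-> //|lm]; rewrite -qr.
Qed.

Variables (pr : rel (alt p)) (i : 'I_p).
Hypothesis pr_irr : irreflexive pr.
Hypothesis pr_total : forall x y, x != y -> pr x y || pr y x.

Lemma LDI_shrink_other_issue r q k b :
  (forall x, dhat k x x = 0) -> 0 <= r k -> k != i ->
  (forall l, l != k -> q l = r l) -> r k <= q k ->
  LDI (U q) pr (a j) i b -> LDI (U r) pr (a j) i b.
Proof.
move=> dh0 r_ge0 ki qr rqk [[[w [qw pr_w]] aj_nbeats_q] b_on_i _].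
have rq l : r l <= q l by case: (eqVneq l k) => [-> //|/qr ->].
apply: LDI_of_dominates => //; split; last first.
  by move=> /(Sbeats_sub (unc_set_le rq)).
pose u := set_issue w k (score_minus a j k).
have ru : U r u by apply: (unc_set_set_issue qr qw); rewrite cw_dist_refl.
have ui : u i = w i by rewrite /u /set_issue eq_sym (negbTE ki).
have u_neq : outcome (add_vote u b) != outcome (add_vote u (a j)).
  apply: contraNneq (preferred_outcome_differs_on_issue pr_irr b_on_i pr_w).
  by move=> e; rewrite -!(outcome_add_vote_scores _ ui) e.
case/orP: (pr_total u_neq) => pr_u; first by exists u.
by case: aj_nbeats_q; exists u; split=> //; apply: unc_set_le ru.
Qed.

Lemma LDI_grow_own_issue r q b :
  (forall l, l != i -> q l = r l) -> r i <= q i ->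
  LDI (U r) pr (a j) i b -> LDI (U q) pr (a j) i b.
Proof.
move=> qr rqi [[b_beats aj_nbeats_r] b_on_i _].
have rq l : r l <= q l by case: (eqVneq l i) => [-> //|/qr ->].
apply: LDI_of_dominates => //; split.
  exact: Sbeats_sub (unc_set_le rq) b_beats.
move=> [v [qv pr_v]]; case: b_beats => w [rw pr_w]; apply: aj_nbeats_r.
have pw := preferred_outcome_differs_on_issue pr_irr b_on_i pr_w.
have aj_on_i : differs_only_on i (a j) b by move=> l /b_on_i ->.
have pv := preferred_outcome_differs_on_issue pr_irr aj_on_i pr_v.
pose u := set_issue v i (w i).
have ru : U r u by exact: unc_set_set_issue qr qv (rw i).
(* On issue [i] both [w] and [v] are pivotal, so there the outcome is the vote's own. *)
have uv c : c = b \/ c = a j -> outcome (add_vote u c) = outcome (add_vote v c).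
  move=> cbaj; apply/ffunP => l; case: (eqVneq l i) => [->|li].
    rewrite (outcome_add_vote_scores (w := w)) /u /set_issue ?eqxx //.
    case: cbaj => ->; [rewrite eq_sym in pv | rewrite eq_sym in pw];
      by rewrite (outcome_pivotal pw) (outcome_pivotal pv).
  by apply: outcome_add_vote_scores; rewrite /u /set_issue (negbTE li).
by exists u; rewrite (uv (a j) (or_intror erefl)) (uv b (or_introl erefl)).
Qed.

End Uncertainty.

Theorem theorem1 (R : realFieldType) (p n : nat)
  (dhat : 'I_p -> nat -> nat -> R) (pref : 'I_n -> rel (alt p))
  (a : 'I_n -> alt p) (j : 'I_n) (i k : 'I_p) (r q qh : 'I_p -> R) :
  (forall l, monotone_dist (dhat l)) ->
  (forall j', strict_linear_order (pref j')) ->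
  (forall l, 0 <= r l) -> (forall l, 0 <= q l) -> (forall l, 0 <= qh l) ->
  k != i ->
  (forall l, l != k -> q l = r l) -> r k < q k ->
  (forall l, l != i -> qh l = r l) -> r i < qh i ->
  forall b : alt p,
    (LDI (unc_set dhat a j q) (pref j) (a j) i b ->
     LDI (unc_set dhat a j r) (pref j) (a j) i b) /\
    (LDI (unc_set dhat a j r) (pref j) (a j) i b ->
     LDI (unc_set dhat a j qh) (pref j) (a j) i b).
Proof.
move=> dhat_dist pref_lin r_ge0 _ _ ki qr rqk qhr rqhi b.
have [pr_irr _ pr_total] := pref_lin j.
have [dhat_k_refl _] := dhat_dist k.
split.
- exact: (LDI_shrink_other_issue (b := b) pr_irr pr_total dhat_k_refl
    (r_ge0 k) ki qr (ltW rqk)).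
- exact: (LDI_grow_own_issue (b := b) pr_irr qhr (ltW rqhi)).
Qed.
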